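(* Let $N\ge 2$ be an integer and for $n\ge 0$ let $$r_{N-1,N}(n)=\operatorname{CT}_{X_1,\ldots,X_N}\big(\sigma_{N-1}(X_1+X_1^{-1},\ldots,X_N+X_N^{-1})\big)^n .$$ Then for all $n\ge 0$, $$r_{N-1,N}(2n)=\sum_{\substack{k_1,\ldots,k_N\ge 0\\ k_1+\cdots+k_N=n}}\binom{2n}{2k_1,\ldots,2k_N}\binom{2(n-k_1)}{n-k_1}\cdots\binom{2(n-k_N)}{n-k_N}.$$ Moreover, if $N$ is even then $r_{N-1,N}(2n+1)=0$ for all $n\ge0$, and if $N$ is odd then for all $n\ge 0$, $$r_{N-1,N}(2n+1)=\sum_{\substack{k_1,\ldots,k_N\ge 0\\ k_1+\cdots+k_N=n+\frac{1-N}{2}}}\binom{2n+1}{2k_1+1,\ldots,2k_N+1}\binom{2(n-k_1)}{n-k_1}\cdots\binom{2(n-k_N)}{n-k_N}.$$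
   Context: $\sigma_{M}(y_1,\ldots,y_N)=\sum_{1\le j_1<\cdots<j_M\le N} y_{j_1}\cdots y_{j_M}$ is the $M$-th elementary symmetric polynomial. $\operatorname{CT}_{X_1,\ldots,X_N} f$ denotes the constant term (coefficient of $X_1^0\cdots X_N^0$) of a Laurent polynomial $f$. $\binom{m}{a_1,\ldots,a_N}=\frac{m!}{a_1!\cdots a_N!}$ denotes the multinomial coefficient (with $a_1+\cdots+a_N=m$); an empty sum is $0$. *)

From mathcomp Require Import all_boot all_order all_algebra.
Set Implicit Arguments. Unset Strict Implicit. Unset Printing Implicit Defensive.
Import GRing.Theory Num.Theory.
Local Open Scope ring_scope.

(* A Laurent polynomial in X_0..X_{N-1}: the formal sum of c * X^e over its terms. *)
Definition lpoly (N : nat) := seq (int * ('I_N -> int)).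

Definition ladd N (p q : lpoly N) : lpoly N := p ++ q.
Definition lmul N (p q : lpoly N) : lpoly N :=
  [seq (a.1 * b.1, fun i => a.2 i + b.2 i) | a <- p, b <- q].
Definition lone N : lpoly N := [:: (1, fun _ => 0)].
Definition lzero N : lpoly N := [::].
Definition lpow N (p : lpoly N) (n : nat) : lpoly N := iter n (lmul p) (lone N).

Definition lmon N (i : 'I_N) (e : int) : lpoly N :=
  [:: (1, fun j => if j == i then e else 0)].

Definition CT N (p : lpoly N) : int :=
  \sum_(t <- p | [forall i, t.2 i == 0]) t.1.

Definition lsigma N (M : nat) (y : 'I_N -> lpoly N) : lpoly N :=
  flatten (map (fun A : {set 'I_N} =>
                  foldr (fun i acc => lmul (y i) acc) (lone N) (enum A))
               (filter (fun A : {set 'I_N} => #|A| == M)%N (enum [set: {set 'I_N}]))).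

Definition Yvar N (i : 'I_N) : lpoly N := ladd (lmon i 1) (lmon i (-1)).

Definition r_seq (N n : nat) : int := CT (lpow (lsigma N.-1 (@Yvar N)) n).

Definition multinom N (m : nat) (a : 'I_N -> nat) : nat :=
  (m`! %/ \prod_(i < N) (a i)`!)%N.

From mathcomp Require Import all_boot all_order all_algebra.
From mathcomp Require Import zify ring.
Set Implicit Arguments. Unset Strict Implicit. Unset Printing Implicit Defensive.
Import GRing.Theory Num.Theory.

(* Since sigma_{N-1}(Y) = sum_j prod_(i != j) Y_i, the multinomial theorem gives
   sigma_{N-1}(Y)^m = sum_(|a| = m) multinom(m; a) prod_i Y_i^(m - a_i), and
   CT Y_i^k = 'C(k, k/2) for k even and 0 for k odd.  So only the a with all
   m - a_i even contribute, i.e. a_i = 2 k_i + (m mod 2), and |a| = m forces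
   N to be odd when m is.  Laurent polynomials being formal sums of terms
   c X^e, the expansion is carried out on their pairings sum c G(e) with
   product test functions G, of which CT is the case G = [e == 0]. *)

Lemma dvdn_prod_fact_sum (I : Type) (r : seq I) (a : I -> nat) :
  \prod_(i <- r) (a i)`! %| (\sum_(i <- r) a i)`!.
Proof.
elim: r => [|x r IHr]; first by rewrite !big_nil.
rewrite !big_cons -(bin_fact (leq_addr (\sum_(j <- r) a j) (a x))) addKn.
exact/dvdn_mull/dvdn_mul.
Qed.

Section Multinomial.
Variable N : nat.
Implicit Types (a b : 'I_N -> nat) (j : 'I_N).

Lemma multinom_prod_fact m a : \sum_i a i = m -> multinom m a * \prod_i (a i)`! = m`!.
Proof. by move=> <-; rewrite divnK // dvdn_prod_fact_sum. Qed.

Lemma eq_multinom m a b : a =1 b -> multinom m a = multinom m b.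
Proof. by move=> eq_ab; rewrite /multinom (eq_bigr _ (fun i _ => congr1 _ (eq_ab i))). Qed.

Lemma sum_delta j : \sum_i (i == j : nat) = 1.
Proof. by rewrite (bigD1 j) //= eqxx big1 // => i /negPf ->. Qed.

Lemma sum_decr a j : 0 < a j -> \sum_i (a i - (i == j)) = (\sum_i a i).-1.
Proof.
move=> aj_gt0; rewrite (bigD1 j) //= [in RHS](bigD1 j) //= eqxx.
by rewrite (eq_bigr a) => [|i /negPf ->]; [lia | rewrite subn0].
Qed.

Lemma prod_fact_decr a j : 0 < a j ->
  \prod_i (a i)`! = a j * \prod_i (a i - (i == j))`!.
Proof.
move=> aj_gt0; rewrite (bigD1 j) //= [in RHS](bigD1 j) //= eqxx subn1.
rewrite -{1}(prednK aj_gt0) factS prednK // mulnA; congr (_ * _).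
by apply: eq_bigr => i /negPf ->; rewrite subn0.
Qed.

Lemma multinomS m a : \sum_i a i = m.+1 ->
  multinom m.+1 a = \sum_(j | 0 < a j) multinom m (fun i => a i - (i == j)).
Proof.
move=> sum_a.
have fact_gt0 : 0 < \prod_i (a i)`! by rewrite prodn_gt0 // => i; rewrite fact_gt0.
apply/eqP; rewrite -(eqn_pmul2r fact_gt0); apply/eqP.
rewrite multinom_prod_fact // big_distrl /=.
rewrite (eq_bigr (fun j => a j * m`!)); last first.
  move=> j aj_gt0; rewrite (prod_fact_decr aj_gt0) mulnCA multinom_prod_fact //.
  by rewrite sum_decr // sum_a.
rewrite factS -sum_a big_distrl /= [LHS](bigID (fun j => 0 < a j)) /=.
by rewrite [X in _ + X]big1 ?addn0 // => j; rewrite lt0n negbK => /eqP ->.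
Qed.

End Multinomial.

(* Compositions of m into N parts are encoded as functions into 'I_M.+1 for a
   fixed bound M >= m, so that they range over a finite type. *)
Section BoundedCompositions.
Variables N M : nat.
Implicit Types (j : 'I_N) (x : {ffun 'I_N -> 'I_M.+1}).

Definition ordsum x : nat := \sum_i (x i : nat).
Definition incr_at j x : {ffun 'I_N -> 'I_M.+1} := [ffun i => inord (x i + (i == j))].
Definition decr_at j x : {ffun 'I_N -> 'I_M.+1} := [ffun i => inord (x i - (i == j))].

Lemma leq_ordsum x j : x j <= ordsum x.
Proof. by rewrite /ordsum (bigD1 j) //= leq_addr. Qed.

Lemma incr_atE j x i : x j < M -> incr_at j x i = x i + (i == j) :> nat.
Proof.
move=> xj_lt; rewrite ffunE inordK //.
by have [-> | _] := eqVneq i j; rewrite ?addn1 ?addn0.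
Qed.

Lemma decr_atE j x i : decr_at j x i = x i - (i == j) :> nat.
Proof. by rewrite ffunE inordK // ltnS (leq_trans (leq_subr _ _)) // -ltnS. Qed.

Lemma incr_at_overflow j x : M <= x j -> incr_at j x j = 0 :> nat.
Proof.
move=> xj_ge; rewrite ffunE eqxx addn1 /inord /insubd insubN //.
by rewrite ltnS -ltnNge.
Qed.

Lemma ordsum_incr_at j x : x j < M -> ordsum (incr_at j x) = (ordsum x).+1.
Proof.
move=> xj_lt; rewrite /ordsum (eq_bigr _ (fun i _ => incr_atE i xj_lt)).
by rewrite big_split /= sum_delta addn1.
Qed.

Lemma incr_atK j x : x j < M -> decr_at j (incr_at j x) = x.
Proof.
move=> xj_lt; apply/ffunP => i; apply: val_inj => /=.
by rewrite decr_atE incr_atE // addnK.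
Qed.

Lemma decr_atK j x : 0 < x j -> incr_at j (decr_at j x) = x.
Proof.
move=> xj_gt0; have xj_lt : decr_at j x j < M.
  by rewrite decr_atE eqxx; have := ltn_ord (x j); lia.
apply/ffunP => i; apply: val_inj => /=; rewrite incr_atE // decr_atE.
by have [-> | _] := eqVneq i j; rewrite ?subn1 ?addn1 ?prednK ?subn0 ?addn0.
Qed.

End BoundedCompositions.

Local Open Scope ring_scope.

Lemma sum_multinomS N M (R : nzSemiRingType) m (F : {ffun 'I_N -> 'I_M.+1} -> R) :
  (m < M)%N ->
  \sum_(x | ordsum x == m.+1) (multinom m.+1 (fun i => x i))%:R * F x
  = \sum_j \sum_(x | ordsum x == m) (multinom m (fun i => x i))%:R * F (incr_at j x).
Proof.
move=> m_lt.
under eq_bigr => x /eqP sum_x do rewrite (multinomS sum_x) natr_sum mulr_suml.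
rewrite (exchange_big_dep xpredT) //=; apply: eq_bigr => j _.
rewrite (reindex_onto (incr_at j) (decr_at j)) /=; last first.
  by move=> x /andP[_ xj_gt0]; apply: decr_atK.
apply: eq_big => [x | x /andP[/andP[_ incr_gt0] _]].
  have [xj_lt | xj_ge] := ltnP (x j) M.
    rewrite ordsum_incr_at // incr_atK // incr_atE // eqxx addn1 eqxx andbT.
    by rewrite eqSS ltn0Sn andbT.
  have -> : ordsum x == m = false.
    by apply/negbTE; rewrite neq_ltn (leq_trans m_lt (leq_trans xj_ge (leq_ordsum _ j))) orbT.
  by rewrite incr_at_overflow // andbF.
have xj_lt : (x j < M)%N.
  by rewrite ltnNge; apply: contraTN incr_gt0 => /incr_at_overflow ->.
congr (_%:R * _); apply: eq_multinom => i.
by rewrite incr_atE // addnK.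
Qed.

Section Pairing.
Variable N : nat.
Implicit Types (p q : lpoly N) (G : ('I_N -> int) -> int) (g : 'I_N -> int -> int).

Definition lpair p G : int := \sum_(t <- p) t.1 * G t.2.

Lemma eq_lpair p G G' : G =1 G' -> lpair p G = lpair p G'.
Proof. by move=> eqG; apply: eq_bigr => t _; rewrite eqG. Qed.

Lemma lpair_ladd p q G : lpair (ladd p q) G = lpair p G + lpair q G.
Proof. exact: big_cat. Qed.

Lemma lpair_lone G : lpair (lone N) G = G (fun _ => 0).
Proof. by rewrite /lpair big_seq1 mul1r. Qed.

Lemma lpair_lmul p q G :
  lpair (lmul p q) G = lpair p (fun e => lpair q (fun f => G (fun i => e i + f i))).
Proof.
rewrite /lpair big_flatten big_map; apply: eq_bigr => a _.
by rewrite big_map mulr_sumr; apply: eq_bigr => b _; rewrite mulrA.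
Qed.

Lemma lpair_sumr p (X : finType) (P : pred X) (c : X -> int) (G : X -> ('I_N -> int) -> int) :
  lpair p (fun e => \sum_(x | P x) c x * G x e) = \sum_(x | P x) c x * lpair p (G x).
Proof.
rewrite /lpair; under eq_bigr => t _ do rewrite mulr_sumr.
rewrite exchange_big /=.
by apply: eq_bigr => x _; rewrite mulr_sumr; apply: eq_bigr => t _; ring.
Qed.

Lemma CT_lpair p : CT p = lpair p (fun e => \prod_i (e i == 0)%:R).
Proof.
rewrite /CT /lpair big_mkcond; apply: eq_bigr => t _.
have [/forallP t0 | /forallPn [i ti]] := boolP [forall i, t.2 i == 0].
  by rewrite big1 ?mulr1 // => i _; rewrite t0.
by rewrite (bigD1 i) //= (negPf ti) mul0r mulr0.
Qed.

Lemma lpair_Yvar_prod (i : 'I_N) g :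
  lpair (Yvar i) (fun e => \prod_j g j (e j))
  = (g i 1 + g i (-1)) * \prod_(j | j != i) g j 0.
Proof.
have lmonE (s : int) : lpair (lmon i s) (fun e => \prod_j g j (e j))
    = g i s * \prod_(j | j != i) g j 0.
  rewrite /lpair big_seq1 mul1r (bigD1 i) //= eqxx.
  by congr (_ * _); apply: eq_bigr => j /negPf ->.
by rewrite lpair_ladd !lmonE mulrDl.
Qed.

Lemma lpair_prod_Yvar (s : seq 'I_N) g : uniq s ->
  lpair (foldr (fun i acc => lmul (Yvar i) acc) (lone N) s) (fun e => \prod_j g j (e j))
  = \prod_j (if j \in s then g j 1 + g j (-1) else g j 0).
Proof.
elim: s g => [|i s IHs] g /=; first by rewrite lpair_lone.
case/andP=> i_notin_s s_uniq; rewrite lpair_lmul.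
pose h j y := if j \in s then g j (y + 1) + g j (y - 1) else g j y.
rewrite (@eq_lpair _ _ (fun e => \prod_j h j (e j))); last first.
  move=> e; rewrite (IHs (fun j x => g j (e j + x))) //.
  by apply: eq_bigr => j _; rewrite /h; case: (j \in s); rewrite ?addr0.
rewrite lpair_Yvar_prod [RHS](bigD1 i) //= inE eqxx /= /h (negPf i_notin_s).
by congr (_ * _); apply: eq_bigr => j ji; rewrite inE (negPf ji) !add0r.
Qed.

Lemma lpair_lsigma_prod g : (0 < N)%N ->
  lpair (lsigma N.-1 (@Yvar N)) (fun e => \prod_i g i (e i))
  = \sum_j g j 0 * \prod_(i | i != j) (g i 1 + g i (-1)).
Proof.
move=> N_gt0.
rewrite /lsigma {1}/lpair big_flatten /= big_map big_filter.
under eq_bigr => A _.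
  rewrite -/(lpair _ (fun e => \prod_i g i (e i))) lpair_prod_Yvar ?enum_uniq //.
  under eq_bigr => i _ do rewrite mem_enum.
  over.
rewrite big_enum_cond /= (reindex_inj (@setC_inj _)) /=.
have cardC1 (B : {set 'I_N}) : (#|~: B| == N.-1) = (B \in [set [set j] | j in 'I_N]).
  have := cardsC B; rewrite card_ord => cardBC.
  apply/eqP/imsetP => [cardB | [j _ ->]]; last by rewrite cardsC1 card_ord.
  have /cards1P [j ->] : #|B| == 1%N by apply/eqP; lia.
  by exists j.
rewrite (eq_bigl (mem [set [set j] | j in 'I_N])); last by move=> B; rewrite in_setT cardC1.
rewrite big_imset /=; last by move=> x y _ _; apply: set1_inj.
apply: eq_bigr => j _; rewrite (bigD1 j) //= !inE eqxx /=; congr (_ * _).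
by apply: eq_bigr => i ij; rewrite !inE ij.
Qed.

End Pairing.

(* The pairing of (X + X^-1)^k with h: a walk of k steps +-1 with t up-steps
   ends at 2 t - k. *)
Definition walk_sum (k : nat) (h : int -> int) : int :=
  \sum_(t < k.+1) 'C(k, t)%:R * h ((2 * t)%N%:Z - k%:Z).

Lemma eq_walk_sum k h h' : h =1 h' -> walk_sum k h = walk_sum k h'.
Proof. by move=> eqh; apply: eq_bigr => t _; rewrite eqh. Qed.

Lemma walk_sum0 h : walk_sum 0 h = h 0.
Proof. by rewrite /walk_sum big_ord1 mul1r. Qed.

Lemma walk_sumS k h :
  walk_sum k.+1 h = walk_sum k (fun x => h (1 + x)) + walk_sum k (fun x => h (-1 + x)).
Proof.
rewrite /walk_sum big_ord_recl /=.
under eq_bigr => t _ do rewrite binS natrD mulrDl.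
rewrite big_split /= addrA [RHS]addrC; congr (_ + _); last first.
  by apply: eq_bigr => t _; congr (_ * h _); rewrite /bump /=; lia.
rewrite big_ord_recr /= (bin_small (ltnSn k)) mul0r addr0 [RHS]big_ord_recl !bin0.
congr (_ + _); first by rewrite /=; congr (_ * h _); lia.
by apply: eq_bigr => t _ /=; congr (_ * h _); rewrite /bump /=; lia.
Qed.

Lemma walk_sum_delta k :
  walk_sum k (fun x => (x == 0)%:R) = if odd k then 0 else 'C(k, k./2)%:R.
Proof.
have end0E (t : 'I_k.+1) : ((2 * t)%N%:Z - k%:Z == 0) = (k == t.*2).
  by apply/eqP/eqP; lia.
rewrite /walk_sum (eq_bigr (fun t : 'I_k.+1 => 'C(k, t)%:R * (k == t.*2)%:R)); last first.
  by move=> t _; rewrite end0E.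
have [k_odd | k_even] := boolP (odd k).
  rewrite big1 // => t _; suff /negPf -> : k != t.*2 by rewrite mulr0.
  by apply: contraTneq k_odd => ->; rewrite odd_double.
have half_lt : (k./2 < k.+1)%N by rewrite ltnS; lia.
have kE : k = k./2.*2 by rewrite -[LHS]odd_double_half (negPf k_even).
rewrite (bigD1 (Ordinal half_lt)) //= -kE eqxx mulr1 big1 ?addr0 // => t t_neq.
suff /negPf -> : k != t.*2 by rewrite mulr0.
apply: contra t_neq => /eqP k2t; apply/eqP/val_inj => /=; lia.
Qed.

Section Expansion.
Variables N M : nat.
Hypothesis N_gt0 : (0 < N)%N.
Implicit Types (g : 'I_N -> int -> int).

Definition multinom_walks m g : int :=
  \sum_(x : {ffun 'I_N -> 'I_M.+1} | ordsum x == m)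
     (multinom m (fun i => x i))%:R * \prod_i walk_sum (m - x i) (g i).

Lemma multinom_walks0 g : multinom_walks 0 g = \prod_i g i 0.
Proof.
rewrite /multinom_walks (big_pred1 [ffun => ord0]); last first.
  move=> x; rewrite /ordsum sum_nat_eq0 /=; apply/forallP/eqP => [x0 | -> i].
    by apply/ffunP => i; rewrite ffunE; apply/val_inj/eqP/x0.
  by rewrite ffunE.
rewrite /multinom big1 ?divn1 ?mul1r => [|i _]; last by rewrite ffunE.
by apply: eq_bigr => i _; rewrite ffunE walk_sum0.
Qed.

Lemma lpair_lsigma_pow m g : (m <= M)%N ->
  lpair (lpow (lsigma N.-1 (@Yvar N)) m) (fun e => \prod_i g i (e i)) = multinom_walks m g.
Proof.
elim: m g => [|m IHm] g m_le; first by rewrite lpair_lone multinom_walks0.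
rewrite /lpow iterS -/(lpow _ m) lpair_lmul.
rewrite (@eq_lpair _ _ _ (fun e => multinom_walks m (fun i y => g i (e i + y)))); last first.
  by move=> e; apply: (IHm (fun i y => g i (e i + y))); apply: ltnW.
rewrite /multinom_walks lpair_sumr.
under eq_bigr => x _ do
  rewrite (lpair_lsigma_prod (fun i z => walk_sum (m - x i) (fun y => g i (z + y)))) // mulr_sumr.
rewrite exchange_big (sum_multinomS _ m_le) /=; apply: eq_bigr => j _.
apply: eq_bigr => x /eqP sum_x; congr (_ * _).
have xj_lt : (x j < M)%N by have := leq_ordsum x j; rewrite sum_x; lia.
rewrite [RHS](bigD1 j) //= incr_atE // eqxx addn1 subSS; congr (_ * _).
  by apply: eq_walk_sum => y; rewrite add0r.
apply: eq_bigr => i ij; rewrite incr_atE // (negPf ij) addn0 -walk_sumS subSn //.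
by rewrite -sum_x leq_ordsum.
Qed.

End Expansion.

Lemma r_seq_multinom_walks N m : (0 < N)%N ->
  r_seq N m = multinom_walks m m (fun (i : 'I_N) x => (x == 0)%:R).
Proof.
move=> N_gt0; rewrite /r_seq CT_lpair.
exact: (lpair_lsigma_pow N_gt0 (fun _ x => (x == 0)%:R) (leqnn m)).
Qed.

Lemma multinom_walks_delta N M m :
  multinom_walks M m (fun (i : 'I_N) x => (x == 0)%:R)
  = \sum_(x : {ffun 'I_N -> 'I_M.+1} | (ordsum x == m) && [forall i, odd (x i) == odd m])
      (multinom m (fun i => x i) * \prod_i 'C(m - x i, (m - x i)./2))%:R.
Proof.
rewrite /multinom_walks.
rewrite (bigID (fun x : {ffun 'I_N -> 'I_M.+1} => [forall i, odd (x i) == odd m])) /=.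
have odd_walk x i : ordsum x = m ->
    walk_sum (m - x i) (fun y => (y == 0)%:R)
    = if odd (x i) == odd m then 'C(m - x i, (m - x i)./2)%:R else 0.
  move=> sum_x; rewrite walk_sum_delta oddB -?sum_x ?leq_ordsum // sum_x.
  by case: (odd m); case: (odd (x i)).
rewrite [X in _ + X]big1 ?addr0 => [|x /andP[/eqP sum_x /forallPn[i /negPf odd_xi]]].
  apply: eq_bigr => x /andP[/eqP sum_x /forallP odd_x]; rewrite natrM natr_prod.
  by congr (_ * _); apply: eq_bigr => i _; rewrite odd_walk // odd_x.
by rewrite (bigD1 i) //= odd_walk // odd_xi mul0r mulr0.
Qed.

Lemma sum_parity_reindex (R : nzSemiRingType) N n (b : bool) (F : ('I_N -> nat) -> R) :
  (forall a a', a =1 a' -> F a = F a') ->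
  \sum_(x : {ffun 'I_N -> 'I_(2 * n + b).+1}
          | (ordsum x == 2 * n + b)%N && [forall i, odd (x i) == b]) F (fun i => x i)
  = \sum_(k : {ffun 'I_N -> 'I_n.+1} | (2 * ordsum k + b * N == 2 * n + b)%N)
      F (fun i => 2 * k i + b)%N.
Proof.
move=> eq_F.
have half_dbl (a : nat) : (2 * a + b)./2 = a.
  by rewrite halfD oddM andFb add0n mul2n doubleK; case: b; rewrite ?addn0.
have dbl_half (a : nat) : odd a = b -> (2 * a./2 + b)%N = a.
  by move=> <-; rewrite mul2n addnC odd_double_half.
pose dbl (k : {ffun 'I_N -> 'I_n.+1}) : {ffun 'I_N -> 'I_(2 * n + b).+1} :=
  [ffun i => inord (2 * k i + b)%N].
pose hlf (x : {ffun 'I_N -> 'I_(2 * n + b).+1}) : {ffun 'I_N -> 'I_n.+1} :=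
  [ffun i => inord (x i)./2].
have dblE k i : dbl k i = (2 * k i + b)%N :> nat.
  by rewrite ffunE inordK // ltnS leq_add2r leq_mul2l -ltnS ltn_ord orbT.
have dblK : cancel dbl hlf.
  move=> k; apply/ffunP => i; apply: val_inj => /=.
  by rewrite ffunE dblE half_dbl inordK.
rewrite (reindex_onto dbl hlf) /=; last first.
  move=> x /andP[/eqP sum_x /forallP odd_x]; apply/ffunP => i; apply: val_inj => /=.
  have xi_le : (x i <= 2 * n + b)%N by rewrite -[leqRHS]sum_x leq_ordsum.
  rewrite dblE ffunE inordK ?dbl_half ?(eqP (odd_x i)) // ltnS; lia.
apply: eq_big => [k | k _]; last by apply: eq_F => i; rewrite dblE.
have -> : ordsum (dbl k) = (2 * ordsum k + b * N)%N.
  rewrite /ordsum (eq_bigr _ (fun i _ => dblE k i)) big_split /= -big_distrr /=.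
  by rewrite big_const_ord iter_addn_0.
rewrite dblK eqxx andbT; case: eqP => //= _; apply/forallP => i.
by rewrite dblE oddD oddM /= oddb.
Qed.

Lemma r_seq_parity N n (b : bool) : (0 < N)%N ->
  r_seq N (2 * n + b) =
  (\sum_(k : {ffun 'I_N -> 'I_n.+1} | 2 * \sum_(i < N) (k i : nat) + b * N == 2 * n + b)
     (multinom (2 * n + b) (fun i => 2 * k i + b) *
      \prod_(i < N) 'C(2 * (n - k i), n - k i)))%N%:Z.
Proof.
move=> N_gt0; set m := (2 * n + b)%N.
have odd_m : odd m = b by rewrite oddD oddM /= oddb.
rewrite r_seq_multinom_walks // multinom_walks_delta odd_m.
pose F (a : 'I_N -> nat) : int := (multinom m a * \prod_i 'C(m - a i, (m - a i)./2))%N%:R.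
have eq_F a a' : a =1 a' -> F a = F a'.
  move=> eq_a; rewrite /F (eq_multinom _ eq_a); congr ((_ * _)%N%:R).
  by apply: eq_bigr => i _; rewrite eq_a.
rewrite (sum_parity_reindex n b eq_F) -natz natr_sum; apply: eq_bigr => k _.
rewrite /F; congr ((_ * _)%N%:R); apply: eq_bigr => i _.
by rewrite /m subnDr -mulnBr mul2n doubleK.
Qed.

Theorem theorem1 (N : nat) (hN : (2 <= N)%N) :
  (forall n : nat,
     r_seq N (2 * n) =
     (\sum_(k : {ffun 'I_N -> 'I_n.+1} | (\sum_(i < N) (k i : nat) == n)%N)
        (multinom (2 * n) (fun i => 2 * k i)%N *
         \prod_(i < N) 'C(2 * (n - k i), n - k i))%N)%:Z) /\
  (~~ odd N -> forall n : nat, r_seq N (2 * n + 1) = 0) /\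
  (odd N -> forall n : nat,
     r_seq N (2 * n + 1) =
     (\sum_(k : {ffun 'I_N -> 'I_n.+1}
             | (\sum_(i < N) (k i : nat) + (N - 1)./2 == n)%N)
        (multinom (2 * n + 1) (fun i => 2 * k i + 1)%N *
         \prod_(i < N) 'C(2 * (n - k i), n - k i))%N)%:Z).
Proof.
have N_gt0 : (0 < N)%N by apply: ltnW.
split; [|split].
- move=> n; have := r_seq_parity n false N_gt0.
  rewrite -[nat_of_bool false]/0%N !addn0 => ->.
  congr _%:Z; apply: eq_big => [k | k _]; first by rewrite mul0n addn0 eqn_pmul2l.
  by congr (_ * _)%N; apply: eq_multinom => i; rewrite addn0.
- move=> N_even n; rewrite (r_seq_parity n true N_gt0) big_pred0 // => k.
  have := odd_double_half N; rewrite (negPf N_even) => N_half.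
  by apply/negbTE/eqP; lia.
- move=> N_odd n; rewrite (r_seq_parity n true N_gt0); congr _%:Z.
  have := odd_double_half N; rewrite N_odd => N_half.
  by apply: eq_bigl => k; rewrite mul1n; apply/eqP/eqP; lia.
Qed.
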